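(* Let $D$ be a period domain, $F\in D$ a reference point, and $V\subset G_{\mathbb R}$ the (compact) stabilizer of $F$. Then every element of $\Lambda^k\big((\mathfrak g^{-1,1})^\vee\oplus(\mathfrak g^{1,-1})^\vee\big)$ that is invariant under the action induced by $\mathrm{Ad}(V)$ lies in $\bigoplus_{p}\Lambda^p(\mathfrak g^{-1,1})^\vee\otimes\Lambda^p(\mathfrak g^{1,-1})^\vee$, i.e. is of type $(p,p)$. Equivalently: the $G_{\mathbb R}$-invariant forms on $D$ that are orthogonal to the algebraic ideal generated by $I$ and $\bar I$ are all of type $(p,p)$.
   Context: $H$ is a finite-dimensional $\mathbb Q$-vector space with non-degenerate bilinear form $Q$, $Q(u,v)=(-1)^nQ(v,u)$; $D$ is the period domain of polarized Hodge structures $H_{\mathbb C}=\bigoplus_{p+q=n}H^{p,q}$ (with $\overline{H^{p,q}}=H^{q,p}$, $Q(F^p,F^{n-p+1})=0$, $Q(Cu,\bar u)>0$ for $u\neq 0$, $C=i^{p-q}$ on $H^{p,q}$, $F^p=\bigoplus_{p'\ge p}H^{p',n-p'}$) with fixed Hodge numbers; $G_{\mathbb R}=\mathrm{Aut}(H_{\mathbb R},Q)$ acts transitively on $D$, $D=G_{\mathbb R}/V$. At $F$, the complexified Lie algebra decomposes as $\mathfrak g_{\mathbb C}=\bigoplus_r\mathfrak g^{r,-r}$, $\mathfrak g^{r,-r}=\{X: X(H^{p,q})\subset H^{p+r,q-r}\}$, with $\mathfrak v_{\mathbb C}=\mathfrak g^{0,0}$; $\mathrm{Ad}(V)$ preserves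 each $\mathfrak g^{r,-r}$. $T^{1,0}_FD\cong\bigoplus_{r>0}\mathfrak g^{-r,r}$, $T^{0,1}_FD\cong\bigoplus_{r>0}\mathfrak g^{r,-r}$. The infinitesimal period relation $I\subset T^{*1,0}D$ is the annihilator of $\mathfrak g^{-1,1}$, and $\bar I$ its conjugate; forms at $F$ orthogonal (for the Hodge metrics) to the algebraic ideal generated by $I,\bar I$ are identified with $\Lambda^*\big((\mathfrak g^{-1,1})^\vee\oplus(\mathfrak g^{1,-1})^\vee\big)$, and $G_{\mathbb R}$-invariant forms correspond to $\mathrm{Ad}(V)$-invariant elements at $F$. Type $(p,q)$ refers to the summand $\Lambda^p(\mathfrak g^{-1,1})^\vee\otimes\Lambda^q(\mathfrak g^{1,-1})^\vee$. *)

From HB Require Import structures.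
From mathcomp Require Import all_boot all_order all_algebra.
From mathcomp Require Import reals complex.
Set Implicit Arguments. Unset Strict Implicit. Unset Printing Implicit Defensive.
Import Order.TTheory GRing.Theory Num.Theory.
Local Open Scope ring_scope.

(* Conventions: H = Q^m with row vectors; subspaces of H_C = C^m are the row
   spaces of square matrices 'M[C]_m (mxalgebra, %MS); C = R[i] with R real.  An endomorphism X acts by u |-> u *m X. *)

Section HodgeData.
Variable R : realType.
Local Notation C := (R[i]).

Definition ratC (x : rat) : C := ratr x.
Definition QC m (Q : 'M[rat]_m) : 'M[C]_m := map_mx ratC Q.
Definition realC m (g : 'M[R]_m) : 'M[C]_m := map_mx (fun x => x%:C%C) g.
Definition conjmx m n (A : 'M[C]_(m, n)) : 'M[C]_(m, n) := map_mx (@conjc R) A.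

Definition Qform m (Q : 'M[rat]_m) (u v : 'rV[C]_m) : C :=
  (u *m QC Q *m v^T) 0 0.

(* H^{p, n-p}, indexed by p; we put H^{p,n-p} = 0 for p outside [0, n] *)
Definition hpart m n (h : nat -> 'M[C]_m) (p : int) : 'M[C]_m :=
  if (0 <= p) && (p <= n%:Z) then h `|p|%N else 0.

Definition filt m n (h : nat -> 'M[C]_m) (p : nat) : 'M[C]_m :=
  (\sum_(p <= p' < n.+1) h p')%MS.

Definition polarized_hodge m n (Q : 'M[rat]_m) (h : nat -> 'M[C]_m) : Prop :=
  [/\ Q^T = (-1) ^+ n *: Q /\ Q \in unitmx,
      (\sum_(p < n.+1) h p :=: 1%:M)%MS /\ mxdirect (\sum_(p < n.+1) h p),
      (forall p, (p <= n)%N -> (conjmx (h p) :=: h (n - p)%N)%MS),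
      (forall p, (p <= n.+1)%N ->
          filt n h p *m QC Q *m (filt n h (n.+1 - p)%N)^T = 0) &
      (forall p (u : 'rV[C]_m), (p <= n)%N -> (u <= h p)%MS -> u != 0 ->
          0 < 'i%C ^ (p%:Z - (n - p)%N%:Z) * Qform Q u (conjmx u))].

Definition in_V m n (Q : 'M[rat]_m) (h : nat -> 'M[C]_m) (g : 'M[R]_m) : Prop :=
  [/\ g \in unitmx,
      g *m map_mx (fun x : rat => (ratr x : R)) Q *m g^T
        = map_mx (fun x : rat => (ratr x : R)) Q &
      forall p, (filt n h p *m realC g <= filt n h p)%MS].

Definition in_gC m (Q : 'M[rat]_m) (X : 'M[C]_m) : Prop :=
  X *m QC Q + QC Q *m X^T = 0.

Definition in_grr m n (Q : 'M[rat]_m) (h : nat -> 'M[C]_m) (r : int)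
    (X : 'M[C]_m) : Prop :=
  in_gC Q X /\ forall p : 'I_n.+1, (h p *m X <= hpart n h (p%:Z + r))%MS.

Definition in_W m n Q (h : nat -> 'M[C]_m) (w : 'M[C]_m * 'M[C]_m) : Prop :=
  in_grr n Q h (-1) w.1 /\ in_grr n Q h 1 w.2.

Definition upd (T : Type) k (w : 'I_k -> T) (i : 'I_k) (x : T) : 'I_k -> T :=
  fun j => if j == i then x else w j.

Definition pair_comb m (a : C) (x y : 'M[C]_m * 'M[C]_m) :=
  (a *: x.1 + y.1, a *: x.2 + y.2).

(* Lambda^k(W^vee), as alternating C-multilinear k-forms on W *)
Definition alt_form m n Q (h : nat -> 'M[C]_m) k
    (om : ('I_k -> 'M[C]_m * 'M[C]_m) -> C) : Prop :=
  (forall w i a x y, (forall j, in_W n Q h (w j)) -> in_W n Q h x ->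
      in_W n Q h y ->
      om (upd w i (pair_comb a x y)) = a * om (upd w i x) + om (upd w i y))
  /\ (forall w (i j : 'I_k), (forall l, in_W n Q h (w l)) -> i != j ->
      w i = w j -> om w = 0).

(* Ad(g) X = g X g^{-1} as endomorphisms; in the row convention: g^-1 X g *)
Definition Ad m (g : 'M[R]_m) (X : 'M[C]_m) : 'M[C]_m :=
  invmx (realC g) *m X *m realC g.

Definition Ad_pair m (g : 'M[R]_m) (x : 'M[C]_m * 'M[C]_m) :=
  (Ad g x.1, Ad g x.2).

(* the component of om in Lambda^p(g^{-1,1})^vee (x) Lambda^{k-p}(g^{1,-1})^vee *)
Definition form_comp m k (om : ('I_k -> 'M[C]_m * 'M[C]_m) -> C) (p : nat)
    (w : 'I_k -> 'M[C]_m * 'M[C]_m) : C :=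
  \sum_(S : {set 'I_k} | #|S| == p)
     om (fun i => if i \in S then ((w i).1, 0) else (0, (w i).2)).

End HodgeData.

(* Let g_z be the element of V acting on H^{p,q} by z^(p-q), for |z| = 1.
   Then Ad(g_z) acts on g^{-1,1} by z^-2 and on g^{1,-1} by z^2, so by
   multilinearity it scales the component of type (p, k-p) of a k-form by
   z^(2(k-2p)).  For z = (3+4i)/5, which is not a root of unity, an
   Ad(V)-invariant form can only have components with 2p = k. *)

From Pilot Require Import Defs.
From HB Require Import structures.
From mathcomp Require Import all_boot all_order all_algebra.
From mathcomp Require Import boolp reals complex.
From mathcomp Require Import ring lra zify.
Import Order.TTheory GRing.Theory Num.Theory.
Local Open Scope ring_scope.
Set Implicit Arguments. Unset Strict Implicit.

Lemma big_subset_setD1 (T : finType) (V : nmodType) (A : {set T}) x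
    (F : {set T} -> V) : x \in A ->
  \sum_(S : {set T} | S \subset A) F S =
    \sum_(S : {set T} | S \subset A :\ x) F (x |: S)
    + \sum_(S : {set T} | S \subset A :\ x) F S.
Proof.
move=> xA; rewrite (bigID (fun S : {set T} => x \in S)) /=; congr (_ + _); last first.
  by apply: eq_bigl => S; rewrite subsetD1.
rewrite (reindex_onto (fun S => x |: S) (fun T => T :\ x)) /=; last first.
  by move=> S /andP[_ xS]; rewrite setD1K.
apply: eq_bigl => S; apply/idP/idP.
  move=> /andP[/andP[sA _] /eqP eS].
  have xS : x \notin S by rewrite -eS !inE eqxx.
  by rewrite subsetD1 xS andbT (subset_trans _ sA) ?subsetUr.
rewrite subsetD1 => /andP[sA xS].
by rewrite setU1K // eqxx setU11 andbT subUset sub1set xA sA.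
Qed.

Lemma prod_set_if (T : finType) (V : comNzRingType) (S : {set T}) (u v : V) :
  \prod_(i in [set: T]) (if i \in S then u else v) = u ^+ #|S| * v ^+ (#|T| - #|S|).
Proof.
rewrite (bigID (mem S)) /=.
rewrite (eq_bigl (fun i => i \in S)) => [|i]; last by rewrite inE.
rewrite (eq_bigr (fun _ => u)) => [|i ->] //; rewrite prodr_const; congr (_ * _).
rewrite (eq_bigl (fun i => i \in ~: S)) => [|i]; last by rewrite !inE.
rewrite (eq_bigr (fun _ => v)) => [|i]; last by rewrite inE => /negPf ->.
by rewrite prodr_const [in RHS](cardsCs S) subKn // max_card.
Qed.

Lemma expfV_mulX_neq1 (F : fieldType) (x : F) (a b : nat) :
  x != 0 -> (forall N, (0 < N)%N -> x ^+ N != 1) -> a != b ->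
  x^-1 ^+ a * x ^+ b != 1.
Proof.
move=> x0 x_not_root neq_ab; apply/eqP => e.
have xa0 c : x ^+ c != 0 by rewrite expf_neq0.
have {e} xab : x ^+ a = x ^+ b by rewrite -[LHS]mulr1 -e exprVn mulrA mulfV ?mul1r.
wlog lt_ab : a b {neq_ab} xab / (a < b)%N.
  move=> wlog_ab; case: ltngtP neq_ab => // lt _.
  - exact: wlog_ab lt.
  - exact: wlog_ab (esym xab) lt.
have := x_not_root (b - a)%N; rewrite subn_gt0 lt_ab => /(_ isT) /eqP[].
apply: (mulfI (xa0 a)); rewrite -exprD subnKC; last exact: ltnW.
by rewrite xab mulr1.
Qed.

Section MultilinearForms.
Variables (R : realType) (m k : nat).
Local Notation C := R[i].
Local Notation mx2 := ('M[C]_m * 'M[C]_m)%type.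

Variable P : mx2 -> Prop.
Hypothesis P_fst : forall x, P x -> P (x.1, 0).
Hypothesis P_snd : forall x, P x -> P (0, x.2).
Hypothesis P_scale : forall c x, P x -> P (c *: x.1, c *: x.2).

Variable om : ('I_k -> mx2) -> C.
Hypothesis om_linear : forall w i a x y, (forall j, P (w j)) -> P x -> P y ->
  om (upd w i (pair_comb a x y)) = a * om (upd w i x) + om (upd w i y).

Lemma P_zero x : P x -> P (0, 0).
Proof. by move/P_snd/P_fst. Qed.

Lemma upd_self (w : 'I_k -> mx2) i : upd w i (w i) = w.
Proof. by apply: funext => j; rewrite /upd; case: eqP => // ->. Qed.

Lemma form_upd0 w i : (forall j, P (w j)) -> om (upd w i (0, 0)) = 0.
Proof.
move=> Pw; have P00 := P_zero (Pw i).
have := om_linear i 1 Pw P00 P00; rewrite /pair_comb /= scaler0 addr0 mul1r.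
by move/eqP; rewrite -subr_eq addrN eq_sym => /eqP.
Qed.

Lemma form_updD w i x y : (forall j, P (w j)) -> P x -> P y ->
  om (upd w i (x.1 + y.1, x.2 + y.2)) = om (upd w i x) + om (upd w i y).
Proof. by move=> Pw Px Py; have := om_linear i 1 Pw Px Py; rewrite /pair_comb !scale1r mul1r. Qed.

Lemma form_updZ w i c x : (forall j, P (w j)) -> P x ->
  om (upd w i (c *: x.1, c *: x.2)) = c * om (upd w i x).
Proof.
move=> Pw Px; have := om_linear i c Pw Px (P_zero Px).
by rewrite /pair_comb /= !addr0 form_upd0 // addr0.
Qed.

Definition split_types (A S : {set 'I_k}) (w : 'I_k -> mx2) : 'I_k -> mx2 :=
  fun i => if i \in A then (if i \in S then ((w i).1, 0) else (0, (w i).2))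
           else w i.

Lemma form_expand_types (A : {set 'I_k}) w : (forall j, P (w j)) ->
  om w = \sum_(S : {set 'I_k} | S \subset A) om (split_types A S w).
Proof.
have [N] := ubnP #|A|; elim: N A w => // N IH A w.
have [->|[x xA]] := set_0Vmem A => [_ Pw|cardA Pw].
  rewrite (big_pred1 set0) => [|S]; last by rewrite subset0.
  by congr om; apply: funext => i; rewrite /split_types inE.
have cardAx : (#|A :\ x| < N)%N by rewrite (cardsD1 x A) xA in cardA.
set wL := upd w x ((w x).1, 0); set wR := upd w x (0, (w x).2).
have PwL j : P (wL j) by rewrite /wL /upd; case: eqP => // _; apply: P_fst.
have PwR j : P (wR j) by rewrite /wR /upd; case: eqP => // _; apply: P_snd.
have -> : om w = om wL + om wR.
  have := form_updD x Pw (P_fst (Pw x)) (P_snd (Pw x)).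
  by rewrite /= addr0 add0r -surjective_pairing upd_self => ->.
rewrite (big_subset_setD1 (V := C) _ xA) (IH _ wL cardAx PwL) (IH _ wR cardAx PwR).
congr (_ + _); apply: eq_bigr => S sS; congr om; apply: funext => i.
  rewrite /split_types /wL /upd.
  have [->|ix] := eqVneq i x; first by rewrite setD11 xA setU11.
  by rewrite !inE (negPf ix).
have xS : x \notin S by move: sS; rewrite subsetD1 => /andP[].
rewrite /split_types /wR /upd.
have [->|ix] := eqVneq i x; first by rewrite setD11 xA (negPf xS).
by rewrite !inE (negPf ix).
Qed.

Lemma form_scale_coords (A : {set 'I_k}) (c : 'I_k -> C) w :
  (forall j, P (w j)) ->
  om (fun i => if i \in A then (c i *: (w i).1, c i *: (w i).2) else w i)
    = (\prod_(i in A) c i) * om w.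
Proof.
have [N] := ubnP #|A|; elim: N A w => // N IH A w.
have [->|[x xA]] := set_0Vmem A => [_ Pw|cardA Pw].
  by rewrite big_set0 mul1r; congr om; apply: funext => i; rewrite inE.
have cardAx : (#|A :\ x| < N)%N by rewrite (cardsD1 x A) xA in cardA.
set w' := fun i => if i \in A :\ x then (c i *: (w i).1, c i *: (w i).2) else w i.
have Pw' j : P (w' j) by rewrite /w'; case: ifP => // _; apply: P_scale.
have -> : (fun i => if i \in A then (c i *: (w i).1, c i *: (w i).2) else w i)
    = upd w' x (c x *: (w' x).1, c x *: (w' x).2).
  apply: funext => i; rewrite /upd /w'.
  have [->|ix] := eqVneq i x; first by rewrite setD11 xA.
  by rewrite !inE (negPf ix).
by rewrite form_updZ // upd_self IH // (big_setD1 x xA) mulrA.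
Qed.

Variable lam : C.
Hypothesis lam_neq0 : lam != 0.
Hypothesis lam_not_root : forall N, (0 < N)%N -> lam ^+ N != 1.
Hypothesis om_torus_invariant : forall w, (forall j, P (w j)) ->
  om (fun i => (lam^-1 *: (w i).1, lam *: (w i).2)) = om w.

(* The torus scales the component of type (#|S|, k - #|S|) by
   lam^-|S| lam^(k-|S|), which is 1 only on balanced types. *)
Lemma form_unbalanced_type_eq0 w (S : {set 'I_k}) : (forall j, P (w j)) ->
  (#|S| + #|S| != k)%N -> om (split_types [set: 'I_k] S w) = 0.
Proof.
move=> Pw unbalanced; set v := split_types [set: 'I_k] S w.
have Pv j : P (v j) by rewrite /v /split_types inE; case: ifP => _; [apply: P_fst | apply: P_snd].
have := om_torus_invariant Pv.
have -> : (fun i => (lam^-1 *: (v i).1, lam *: (v i).2)) =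
    (fun i => if i \in [set: 'I_k] then
       ((if i \in S then lam^-1 else lam) *: (v i).1,
        (if i \in S then lam^-1 else lam) *: (v i).2) else v i).
  by apply: funext => i; rewrite inE /v /split_types inE; case: ifP; rewrite /= !scaler0.
rewrite form_scale_coords // prod_set_if card_ord => /eqP.
rewrite -subr_eq0 -{2}[om v]mul1r -mulrBl mulf_eq0 subr_eq0.
rewrite (negPf (expfV_mulX_neq1 lam_neq0 lam_not_root _)) => [/eqP //|].
apply: contra unbalanced => /eqP {2}->; rewrite subnKC //.
by have := max_card (mem S); rewrite card_ord.
Qed.

Lemma form_balanced_decomposition w : (forall j, P (w j)) ->
  om w = \sum_(p < k.+1 | (p + p == k)%N) form_comp om p w.
Proof.
move=> Pw; rewrite (form_expand_types [set: 'I_k] Pw).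
rewrite (eq_bigl predT) => [|S]; last by rewrite subsetT.
have form_compE (p : 'I_k.+1) : form_comp om p w =
    \sum_(S : {set 'I_k}) (if #|S| == p then om (split_types [set: 'I_k] S w) else 0).
  rewrite /form_comp big_mkcond; apply: eq_bigr => S _.
  by case: ifP => // _; congr om; apply: funext => i; rewrite /split_types inE.
rewrite (eq_bigr _ (fun p _ => form_compE p)) exchange_big /=; apply: eq_bigr => S _.
have [balanced|unbalanced] := eqVneq (#|S| + #|S|)%N k; last first.
  by rewrite form_unbalanced_type_eq0 // big1 // => p _; case: ifP.
have cardS : (#|S| < k.+1)%N by have := max_card (mem S); rewrite card_ord.
rewrite (bigD1 (Ordinal cardS)) /= ?balanced // eqxx big1 ?addr0 // => p /andP[_ pS].
by case: eqP => // eSp; case/eqP: pS; apply: val_inj.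
Qed.

End MultilinearForms.

Local Notation conjmx := Defs.conjmx.

Section ConjugateMatrix.
Variable R : realType.

Lemma conjmxK l l' (A : 'M[R[i]]_(l, l')) : conjmx (conjmx A) = A.
Proof. by apply/matrixP => i j; rewrite !mxE conjcK. Qed.

Lemma conjmxM l1 l2 l3 (A : 'M[R[i]]_(l1, l2)) (B : 'M[R[i]]_(l2, l3)) :
  conjmx (A *m B) = conjmx A *m conjmx B.
Proof. exact: map_mxM. Qed.

Lemma conjmxZ l l' (a : R[i]) (A : 'M[R[i]]_(l, l')) :
  conjmx (a *: A) = a^*%C *: conjmx A.
Proof. exact: map_mxZ. Qed.

Lemma conjmxT l l' (A : 'M[R[i]]_(l, l')) : conjmx A^T = (conjmx A)^T.
Proof. by rewrite /Defs.conjmx map_trmx. Qed.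

Lemma conjmx_QC m (Q : 'M[rat]_m) : conjmx (QC R Q) = QC R Q.
Proof. by apply/matrixP => i j; rewrite !mxE /ratC fmorph_rat. Qed.

End ConjugateMatrix.

Section HodgeDecomposition.
Variables (R : realType) (m n : nat) (Q : 'M[rat]_m) (h : nat -> 'M[R[i]]_m).
Local Notation C := R[i].
Hypothesis h_sum : (\sum_(p < n.+1) h p :=: 1%:M)%MS.
Hypothesis h_direct : mxdirect (\sum_(p < n.+1) h p).
Hypothesis h_conj : forall p, (p <= n)%N -> (conjmx (h p) :=: h (n - p)%N)%MS.
Hypothesis h_filt : forall p, (p <= n.+1)%N ->
  filt n h p *m QC R Q *m (filt n h (n.+1 - p)%N)^T = 0.

Definition hodge_compl (p : 'I_n.+1) := (\sum_(q < n.+1 | q != p) h q)%MS.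
Definition hodge_proj (p : 'I_n.+1) := proj_mx (h p) (hodge_compl p).

Lemma hodge_compl_cap0 (p : 'I_n.+1) : (h p :&: hodge_compl p = 0)%MS.
Proof. by move/mxdirect_sumsP: h_direct; apply. Qed.

Lemma hodge_proj_id l (A : 'M_(l, m)) (p : 'I_n.+1) :
  (A <= h p)%MS -> A *m hodge_proj p = A.
Proof. by move=> sA; rewrite proj_mx_id ?hodge_compl_cap0. Qed.

Lemma hodge_proj_0 l (A : 'M_(l, m)) (p q : 'I_n.+1) :
  (A <= h q)%MS -> q != p -> A *m hodge_proj p = 0.
Proof. by move=> sA qp; rewrite proj_mx_0 ?hodge_compl_cap0 // (sumsmx_sup q). Qed.

Lemma eq_on_hodge l (A B : 'M[C]_(m, l)) :
  (forall p : 'I_n.+1, h p *m A = h p *m B) -> A = B.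
Proof.
move=> eqAB; rewrite -[A]mul1mx -[B]mul1mx.
have /sub_sumsmxP[u ->] : (1%:M <= \sum_(p < n.+1) h p)%MS by rewrite h_sum.
by rewrite !mulmx_suml; apply: eq_bigr => p _; rewrite -!mulmxA eqAB.
Qed.

Definition hodge_scale (mu : nat -> C) := \sum_(p < n.+1) mu p *: hodge_proj p.

Lemma hodge_scale_act mu l (A : 'M_(l, m)) (p : 'I_n.+1) : (A <= h p)%MS ->
  A *m hodge_scale mu = mu p *: A.
Proof.
move=> sA; rewrite /hodge_scale mulmx_sumr (bigD1 p) //= -scalemxAr hodge_proj_id //.
rewrite big1 ?addr0 // => q qp; rewrite -scalemxAr (hodge_proj_0 sA) ?scaler0 //.
by rewrite eq_sym.
Qed.

Lemma hodge_sub_filt r p : (r <= p)%N -> (p <= n)%N -> (h p <= filt n h r)%MS.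
Proof.
move=> rp pn; rewrite /filt big_geq_mkord.
exact: (sumsmx_sup (Ordinal (pn : (p < n.+1)%N))).
Qed.

Lemma hodge_orth_gt l1 l2 (A : 'M[C]_(l1, m)) (B : 'M[C]_(l2, m)) p q :
  (p <= n)%N -> (q <= n)%N -> (n < p + q)%N -> (A <= h p)%MS -> (B <= h q)%MS ->
  A *m QC R Q *m B^T = 0.
Proof.
move=> pn qn npq sA sB.
have /submxP[a ->] : (A <= filt n h p)%MS by apply: submx_trans sA (hodge_sub_filt _ pn).
have /submxP[b ->] : (B <= filt n h (n.+1 - p))%MS.
  by apply: submx_trans sB (hodge_sub_filt _ qn); lia.
by rewrite trmx_mul !mulmxA -(mulmxA a) -(mulmxA a) h_filt ?mulmx0 ?mul0mx //; lia.
Qed.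

(* Complex conjugation reflects the case p + q < n onto p + q > n. *)
Lemma hodge_orth l1 l2 (A : 'M[C]_(l1, m)) (B : 'M[C]_(l2, m)) p q :
  (p <= n)%N -> (q <= n)%N -> (p + q != n)%N -> (A <= h p)%MS -> (B <= h q)%MS ->
  A *m QC R Q *m B^T = 0.
Proof.
move=> pn qn npq sA sB; have [lt|ge] := ltnP n (p + q).
  exact: hodge_orth_gt lt sA sB.
suff conj0 : conjmx (A *m QC R Q *m B^T) = 0.
  by rewrite -[LHS]conjmxK conj0; apply: map_mx0.
rewrite !conjmxM conjmx_QC conjmxT.
apply: (@hodge_orth_gt _ _ _ _ (n - p) (n - q)); rewrite ?leq_subr //.
- by lia.
- by rewrite -h_conj // map_submx.
- by rewrite -h_conj // map_submx.
Qed.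

Variable z : C.
Hypothesis z_unit_circle : z * z^*%C = 1.

Lemma z_neq0 : z != 0.
Proof. by apply: contra_eq_neq z_unit_circle => ->; rewrite mul0r eq_sym oner_neq0. Qed.

Lemma conj_z : z^*%C = z^-1.
Proof. by rewrite -[LHS]mul1r -(mulVf z_neq0) -mulrA z_unit_circle mulr1. Qed.

Definition circle_weight (p : nat) : C := z ^+ p / z ^+ (n - p).

Lemma circle_weight_neq0 p : circle_weight p != 0.
Proof. by rewrite mulf_neq0 ?invr_eq0 ?expf_neq0 ?z_neq0. Qed.

Lemma conj_circle_weight p : (p <= n)%N ->
  (circle_weight p)^*%C = circle_weight (n - p).
Proof.
move=> pn; rewrite /circle_weight subKn // rmorphM fmorphV !rmorphXn /=.
by rewrite conj_z !exprVn invrK mulrC.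
Qed.

Lemma circle_weight_ratio p : (p < n)%N ->
  circle_weight p.+1 = z ^+ 2 * circle_weight p.
Proof.
move=> lt_pn; rewrite /circle_weight -(subnSK lt_pn) !exprS.
by field; rewrite z_neq0 !expf_neq0 ?z_neq0.
Qed.

Definition circle_mx := hodge_scale circle_weight.

Lemma circle_mx_act l (A : 'M_(l, m)) p : (p <= n)%N -> (A <= h p)%MS ->
  A *m circle_mx = circle_weight p *: A.
Proof. by move=> pn; apply: (@hodge_scale_act _ _ A (Ordinal (pn : (p < n.+1)%N))). Qed.

Lemma circle_mx_real : conjmx circle_mx = circle_mx.
Proof.
apply: eq_on_hodge => p; have pn : (p <= n)%N := ltn_ord p.
have sc : (conjmx (h p) <= h (n - p))%MS by rewrite h_conj.
rewrite (circle_mx_act pn (submx_refl _)) -{1}[h p]conjmxK -conjmxM.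
by rewrite (circle_mx_act (leq_subr p n) sc) conjmxZ conjmxK conj_circle_weight ?subKn ?leq_subr.
Qed.

Lemma circle_mx_unit : circle_mx \in unitmx.
Proof.
suff /mulmx1_unit[] : circle_mx *m hodge_scale (fun p => (circle_weight p)^-1) = 1%:M by [].
apply: eq_on_hodge => p; rewrite mulmxA (circle_mx_act (ltn_ord p) (submx_refl _)).
rewrite mulmx1 -scalemxAl (hodge_scale_act _ (submx_refl _)) scalerA.
by rewrite mulfV ?scale1r ?circle_weight_neq0.
Qed.

Lemma circle_mx_inv_act (p : 'I_n.+1) :
  h p *m invmx circle_mx = (circle_weight p)^-1 *: h p.
Proof.
rewrite -{2}[h p](mulmxK circle_mx_unit) (circle_mx_act (ltn_ord p) (submx_refl _)).
by rewrite -scalemxAl scalerA mulVf ?scale1r ?circle_weight_neq0.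
Qed.

(* On H^{p,q} (x) H^{q,p} the two weights z^(p-q) and z^(q-p) cancel; every
   other pairing vanishes by [hodge_orth]. *)
Lemma circle_mx_Q : circle_mx *m QC R Q *m circle_mx^T = QC R Q.
Proof.
apply: eq_on_hodge => p; apply: trmx_inj; apply: eq_on_hodge => q.
have pn : (p <= n)%N := ltn_ord p.
have qn : (q <= n)%N := ltn_ord q.
rewrite -[h q]trmxK -!trmx_mul; congr trmx.
have -> : h p *m (circle_mx *m QC R Q *m circle_mx^T) *m (h q)^T
    = (h p *m circle_mx) *m QC R Q *m (h q *m circle_mx)^T.
  by rewrite trmx_mul !mulmxA.
rewrite (circle_mx_act pn (submx_refl _)) (circle_mx_act qn (submx_refl _)).
rewrite linearZ /= -scalemxAl -scalemxAr -scalemxAl scalerA.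
have [e|ne] := eqVneq (p + q)%N n; last by rewrite (hodge_orth pn qn ne) ?scaler0.
have -> : circle_weight q * circle_weight p = 1.
  rewrite /circle_weight; have [-> ->] : (n - p = q)%N /\ (n - q = p)%N by lia.
  by rewrite mulrA divfK ?mulfV ?expf_neq0 ?z_neq0.
by rewrite scale1r.
Qed.

Definition circle_elt : 'M[R]_m := map_mx (fun x : C => complex.Re x) circle_mx.

Lemma realC_circle_elt : realC circle_elt = circle_mx.
Proof.
apply/matrixP => i j; have := congr1 (fun M : 'M[C]_m => M i j) circle_mx_real.
rewrite /realC /circle_elt !mxE /=; case: (circle_mx i j) => a b /= [] e.
by congr Complex; lra.
Qed.

Lemma circle_elt_in_V : in_V n Q h circle_elt.
Proof.
have realCE : map_mx (real_complex R) circle_elt = circle_mx := realC_circle_elt.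
split.
- by rewrite -(map_unitmx (real_complex R)) realCE circle_mx_unit.
- apply: (@map_mx_inj _ _ (real_complex R)).
  have QCE : map_mx (real_complex R) (map_mx (fun x : rat => (ratr x : R)) Q) = QC R Q.
    by apply/matrixP => i j; rewrite !mxE /ratC fmorph_rat.
  have realCET : map_mx (real_complex R) circle_elt^T = circle_mx^T.
    by rewrite -realCE; apply/matrixP => i j; rewrite !mxE.
  by rewrite !map_mxM realCET realCE QCE circle_mx_Q.
- move=> p; rewrite realC_circle_elt /filt big_geq_mkord sumsmxMr.
  apply: sumsmxS => q _.
  by rewrite (circle_mx_act (ltn_ord q) (submx_refl _)) scalemx_sub.
Qed.

Lemma Ad_circle_grr_m1 X : in_grr n Q h (-1) X -> Ad circle_elt X = (z ^+ 2)^-1 *: X.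
Proof.
move=> [_ sX]; rewrite /Ad realC_circle_elt; apply: eq_on_hodge => p.
rewrite !mulmxA circle_mx_inv_act -!scalemxAl -scalemxAr.
move: (sX p); rewrite /hpart; case: p => [[|q] lt_qn] /=.
  by rewrite submx0 => /eqP ->; rewrite mul0mx !scaler0.
rewrite ifT ?subn1 /= => [sXq|]; last by lia.
rewrite (circle_mx_act _ sXq) ?scalerA ?circle_weight_ratio //; last by lia.
by rewrite invfM -mulrA mulVf ?mulr1 ?circle_weight_neq0.
Qed.

Lemma Ad_circle_grr_1 X : in_grr n Q h 1 X -> Ad circle_elt X = z ^+ 2 *: X.
Proof.
move=> [_ sX]; rewrite /Ad realC_circle_elt; apply: eq_on_hodge => p.
rewrite !mulmxA circle_mx_inv_act -!scalemxAl -scalemxAr.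
move: (sX p); rewrite /hpart; case: p => [q lt_qn] /=.
have [qn|nq] := ltnP q n; last first.
  by rewrite ifF; [rewrite submx0 => /eqP ->; rewrite mul0mx !scaler0 | lia].
rewrite ifT ?addn1 // => [sXq|]; last by lia.
rewrite (circle_mx_act qn sXq) scalerA circle_weight_ratio //.
by rewrite mulrCA mulVf ?mulr1 ?circle_weight_neq0.
Qed.

End HodgeDecomposition.

Section NotRootOfUnity.
Variable R : realType.

(* 3 + 4i has norm 5 but is not 5 times a root of unity. *)
Definition zeta : R[i] := ((3%:R / 5%:R) +i* (4%:R / 5%:R))%C.

Lemma zeta_unit_circle : zeta * zeta^*%C = 1.
Proof.
apply/eqP; rewrite eq_complex /=.
have n5 : (5%:R : R) != 0 by rewrite pnatr_eq0.
by apply/andP; split; apply/eqP; field.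
Qed.

Fixpoint gauss_pow (N : nat) : int * int :=
  if N is N'.+1 then let (a, b) := gauss_pow N' in (3 * a - 4 * b, 4 * a + 3 * b)%R
  else (1%R, 0%R).

Lemma zeta_expE N : zeta ^+ N =
  (((gauss_pow N).1%:~R / 5%:R ^+ N) +i* ((gauss_pow N).2%:~R / 5%:R ^+ N))%C.
Proof.
elim: N => [|N IH]; first by rewrite expr0 /= !expr0 !divr1.
rewrite exprS IH /=; case: (gauss_pow N) => a b /=.
apply/eqP; rewrite eq_complex /=.
have n5 : (5%:R : R) != 0 by rewrite pnatr_eq0.
have n5N : (5%:R : R) ^+ N != 0 by rewrite expf_neq0.
rewrite !(rmorphB, rmorphD, rmorphM) /= !rmorph1 exprS.
by apply/andP; split; apply/eqP; field.
Qed.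

(* Since 11 = 1 (mod 5), the recursion preserves a + 2b modulo 5. *)
Lemma gauss_pow_mod5 N : exists c : int, ((gauss_pow N).1 + 2 * (gauss_pow N).2 = 1 + 5 * c)%R.
Proof.
elim: N => [|N [c IH]]; first by exists 0%R.
move: IH => /=; case: (gauss_pow N) => a b /= IH.
by exists (c + 2 * a)%R; lia.
Qed.

Lemma zeta_not_root N : (0 < N)%N -> zeta ^+ N != 1.
Proof.
case: N => // N _; apply/eqP; rewrite zeta_expE.
have := gauss_pow_mod5 N.+1.
case: (gauss_pow N.+1) => a b /= [c mod5] /eqP; rewrite eq_complex /= => /andP[e1 e2].
have n5N : (5%:R : R) ^+ N.+1 != 0 by rewrite expf_neq0 ?pnatr_eq0.
have ea : a = (5 ^+ N.+1)%R.
  by apply: (@intr_inj R); move: e1 => /eqP /divr1_eq ->; rewrite rmorphXn.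
have eb : b = 0.
  apply: (@intr_inj R); move: e2.
  by rewrite mulf_eq0 invr_eq0 (negPf n5N) orbF => /eqP ->; rewrite rmorph0.
by move: mod5; rewrite ea eb exprS; lia.
Qed.

End NotRootOfUnity.

Section PeriodRelationSpace.
Variables (R : realType) (m n : nat) (Q : 'M[rat]_m) (h : nat -> 'M[R[i]]_m).

Lemma in_grr0 r : in_grr n Q h r 0.
Proof.
split; first by rewrite /in_gC mul0mx trmx0 mulmx0 addr0.
by move=> p; rewrite mulmx0 sub0mx.
Qed.

Lemma in_grrZ r c X : in_grr n Q h r X -> in_grr n Q h r (c *: X).
Proof.
move=> [gX sX]; split => [|p]; last by rewrite -scalemxAr scalemx_sub.
by rewrite /in_gC -scalemxAl linearZ /= -scalemxAr -scalerDr gX scaler0.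
Qed.

Lemma in_W_fst x : in_W n Q h x -> in_W n Q h (x.1, 0).
Proof. by case=> Wx _; split => //; apply: in_grr0. Qed.

Lemma in_W_snd x : in_W n Q h x -> in_W n Q h (0, x.2).
Proof. by case=> _ Wx; split => //; apply: in_grr0. Qed.

Lemma in_W_scale c x : in_W n Q h x -> in_W n Q h (c *: x.1, c *: x.2).
Proof. by case=> Wx1 Wx2; split; apply: in_grrZ. Qed.

End PeriodRelationSpace.

Theorem theorem4p10 (R : realType) (m n : nat) (Q : 'M[rat]_m)
    (h : nat -> 'M[R[i]]_m) (k : nat)
    (om : ('I_k -> 'M[R[i]]_m * 'M[R[i]]_m) -> R[i]) :
  polarized_hodge n Q h ->
  alt_form n Q h om ->
  (forall g : 'M[R]_m, in_V n Q h g ->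
     forall w, (forall i, in_W n Q h (w i)) ->
       om (fun i => Ad_pair g (w i)) = om w) ->
  forall w, (forall i, in_W n Q h (w i)) ->
    om w = \sum_(p < k.+1 | (p + p == k)%N) form_comp om p w.
Proof.
move=> [_ [h_sum h_direct] h_conj h_filt _] [om_linear _] om_Ad_invariant.
have zeta_circle := zeta_unit_circle R.
set g := circle_elt n h (zeta R).
have zeta2_neq0 : zeta R ^+ 2 != 0.
  by rewrite expf_neq0 //; apply: contra_eq_neq zeta_circle => ->; rewrite mul0r eq_sym oner_neq0.
have zeta2_not_root N : (0 < N)%N -> (zeta R ^+ 2) ^+ N != 1.
  by move=> N_gt0; rewrite -exprM zeta_not_root // muln_gt0.
apply: (form_balanced_decomposition (@in_W_fst _ _ _ _ _) (@in_W_snd _ _ _ _ _)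
  (@in_W_scale _ _ _ _ _) om_linear zeta2_neq0 zeta2_not_root) => w Ww.
rewrite -(om_Ad_invariant g (circle_elt_in_V h_sum h_direct h_conj h_filt zeta_circle) w Ww).
congr om; apply: funext => i; case: (Ww i) => W1 W2.
by rewrite /Ad_pair (Ad_circle_grr_m1 h_sum h_direct h_conj zeta_circle W1)
  (Ad_circle_grr_1 h_sum h_direct h_conj zeta_circle W2).
Qed.
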